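(* Let $g_4(a,b,c,d)=S^4_3+3S^4_{1,1,1}-T^4_{2,1}$. Then $g_4(a^2,b^2,c^2,d^2)\in\mathcal{E}(\mathcal{P}_{4,6})\setminus\Sigma_{4,6}$, and $g_4\in\mathcal{E}(\mathcal{P}^+_{4,3})$.
   Context: Variables $a,b,c,d$ (also $x_1,\dots,x_4$). $S^4_3=\sum_i x_i^3$, $T^4_{2,1}=\sum_{i}x_i^2\sum_{j\ne i}x_j$, $S^4_{1,1,1}=bcd+acd+abd+abc$. $\mathcal{P}_{4,6}$ is the cone of real homogeneous sextic forms in $a,b,c,d$ that are nonnegative on $\mathbb{R}^4$, $\Sigma_{4,6}\subset\mathcal{P}_{4,6}$ the cone of sums of squares of real cubic forms. $\mathcal{P}^+_{4,3}$ is the cone of all real homogeneous cubic forms in $a,b,c,d$ nonnegative on $\mathbb{R}_{\ge0}^4$. For a closed convex cone $\mathcal{P}$, $f\in\mathcal{P}\setminus\{0\}$ is extremal if $f=g+h$ with $g,h\in\mathcal{P}$ forces $g,h\in\mathbb{R}_{\ge0}f$; $\mathcal{E}(\mathcal{P})$ is the set of extremal elements. *)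

From mathcomp Require Import all_boot all_algebra.
From mathcomp Require Import reals.
From mathcomp Require Import mpoly.
Set Implicit Arguments. Unset Strict Implicit. Unset Printing Implicit Defensive.
Import GRing.Theory Num.Theory.
Local Open Scope ring_scope.

Section Forms.
Variable R : realType.
Local Notation P := {mpoly R[4]}.

Definition S3 : P := \sum_(i < 4) 'X_i ^+ 3.
Definition T21 : P := \sum_(i < 4) ('X_i ^+ 2 * \sum_(j < 4 | j != i) 'X_j).
Definition S111 : P := \sum_(i < 4) \prod_(j < 4 | j != i) 'X_j.

Definition g4 : P := S3 + 3%:R *: S111 - T21.

Definition g4sq : P := comp_mpoly [tuple 'X_i ^+ 2 | i < 4] g4.

Definition P46 (p : P) : Prop :=
  p \is 6.-homog /\ forall x : 'I_4 -> R, 0 <= p.@[x].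

Definition Sigma46 (p : P) : Prop :=
  exists s : seq P, all (fun q => q \is 3.-homog) s /\ p = \sum_(q <- s) q ^+ 2.

Definition Pplus43 (p : P) : Prop :=
  p \is 3.-homog /\ forall x : 'I_4 -> R, (forall i, 0 <= x i) -> 0 <= p.@[x].

Definition extremal (C : P -> Prop) (f : P) : Prop :=
  C f /\ f != 0 /\
  forall g h : P, C g -> C h -> f = g + h ->
    (exists c : R, 0 <= c /\ g = c *: f) /\ (exists c : R, 0 <= c /\ h = c *: f).

End Forms.

(* Nonnegativity: g4 is symmetric, and at a sorted point of the orthant it is
   a polynomial with nonnegative coefficients in the smallest coordinate and
   the gaps between consecutive ones.
   Extremality: if 0 <= g <= f in the cone, g vanishes at the zeros of f and,
   being nonnegative along segments through them, has vanishing slopes there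
   (first-order expansion along a line).  At the integer zeros of f these are
   integer linear conditions on the coefficient vector of g; a fraction-free
   Gauss-Jordan elimination, proved sound and run by computation, shows that
   they tie every coefficient to that of a^d.  As f satisfies them as well,
   g = g(e1) f.
   Not a sum of squares: a cubic q with q^2 <= f vanishes on the real zeros
   of f, which by elimination forces q(e1) = 0, whereas f(e1) = 1. *)

From Stdlib Require Import ZArith.
From HB Require Import structures.
From mathcomp Require Import all_boot all_order all_algebra.
From mathcomp Require Import reals mpoly ssrZ ring lra.
Set Implicit Arguments. Unset Strict Implicit. Unset Printing Implicit Defensive.
Import Order.TTheory GRing.Theory Num.Theory.
Local Open Scope ring_scope.

Definition i0 : 'I_4 := @Ordinal 4 0 isT.
Definition i1 : 'I_4 := @Ordinal 4 1 isT.
Definition i2 : 'I_4 := @Ordinal 4 2 isT.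
Definition i3 : 'I_4 := @Ordinal 4 3 isT.

Lemma ord4P (j : 'I_4) : [\/ j = i0, j = i1, j = i2 | j = i3].
Proof.
case: j => [[|[|[|[|k]]]] Hk] //.
- by constructor 1; apply/val_inj.
- by constructor 2; apply/val_inj.
- by constructor 3; apply/val_inj.
- by constructor 4; apply/val_inj.
Qed.

Lemma big_ord4 (T : Type) (idx : T) (op : Monoid.law idx) (F : 'I_4 -> T) :
  \big[op/idx]_(i < 4) F i = op (op (op (F i0) (F i1)) (F i2)) (F i3).
Proof.
rewrite !big_ord_recr big_ord0 /= Monoid.mul1m.
by congr (op (op (op (F _) (F _)) (F _)) (F _)); apply: val_inj.
Qed.

(* Exponent vectors of monomials in a, b, c, d, as quadruples of naturals;
   this concrete representation lets coefficient vectors be computed. *)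
Definition quad := (nat * nat * nat * nat)%type.

Definition mk (q : quad) : 'X_{1..4} :=
  [multinom [tuple q.1.1.1; q.1.1.2; q.1.2; q.2]].

Definition quad_of (m : 'X_{1..4}) : quad := (m i0, m i1, m i2, m i3).

Lemma quad_ofK : cancel quad_of mk.
Proof. by move=> m; apply/mnmP => j; case: (ord4P j) => ->. Qed.

Lemma mkK : cancel mk quad_of.
Proof. by case=> [[[a b] c] e]. Qed.

(* All exponent vectors of total degree d, in lexicographic order; the last
   one is (d, 0, 0, 0), the exponent of a^d. *)
Definition exponents (d : nat) : seq quad :=
  flatten [seq flatten [seq [seq (a, b, c, (d - a - b - c)%N)
                              | c <- iota 0 (d - a - b).+1]
                         | b <- iota 0 (d - a).+1] | a <- iota 0 d.+1].

Lemma exponents_complete d a b c e :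
  (a + b + c + e)%N = d -> (a, b, c, e) \in exponents d.
Proof.
move=> <-; rewrite -!addnA.
apply/flatten_mapP; exists a; first by rewrite mem_iota ltnS leq_addr.
apply/flatten_mapP; exists b; first by rewrite mem_iota ltnS addKn leq_addr.
apply/mapP; exists c; first by rewrite mem_iota ltnS !addKn leq_addr.
by rewrite !addKn.
Qed.

Lemma quad_of_exponents (m : 'X_{1..4}) : quad_of m \in exponents (mdeg m).
Proof. by apply: exponents_complete; rewrite mdegE big_ord4. Qed.

Section Monomials.
Variable S : comNzRingType.

Definition mono (q : quad) (x : 'I_4 -> S) : S :=
  x i0 ^+ q.1.1.1 * x i1 ^+ q.1.1.2 * x i2 ^+ q.1.2 * x i3 ^+ q.2.

Definition dpow (b : bool) (y : S) (k : nat) : S := b%:R * (k%:R * y ^+ k.-1).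

Definition dmono (q : quad) (x : 'I_4 -> S) (i : 'I_4) : S :=
    dpow (i0 == i) (x i0) q.1.1.1 * x i1 ^+ q.1.1.2 * x i2 ^+ q.1.2 * x i3 ^+ q.2
  + x i0 ^+ q.1.1.1 * dpow (i1 == i) (x i1) q.1.1.2 * x i2 ^+ q.1.2 * x i3 ^+ q.2
  + x i0 ^+ q.1.1.1 * x i1 ^+ q.1.1.2 * dpow (i2 == i) (x i2) q.1.2 * x i3 ^+ q.2
  + x i0 ^+ q.1.1.1 * x i1 ^+ q.1.1.2 * x i2 ^+ q.1.2 * dpow (i3 == i) (x i3) q.2.

End Monomials.

Section MonomialMorphisms.
Variables (S T : comNzRingType) (phi : {rmorphism S -> T}).

Lemma mono_rmorph q (w : 'I_4 -> S) : mono q (phi \o w) = phi (mono q w).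
Proof. by rewrite /mono !rmorphM !rmorphXn. Qed.

Lemma dmono_rmorph q (w : 'I_4 -> S) i : dmono q (phi \o w) i = phi (dmono q w i).
Proof. by rewrite /dmono /dpow !(rmorphD, rmorphM, rmorphXn, rmorph_nat). Qed.

End MonomialMorphisms.

Lemma big_uniq_superset (R : nmodType) (T : eqType) (s1 s2 : seq T) (F : T -> R) :
  uniq s1 -> uniq s2 -> {subset s1 <= s2} ->
  (forall m, m \in s2 -> m \notin s1 -> F m = 0) ->
  \sum_(m <- s1) F m = \sum_(m <- s2) F m.
Proof.
move=> u1 u2 sub F0; rewrite [RHS](bigID (mem s1)) /=.
rewrite [X in _ = _ + X]big_seq_cond [X in _ = _ + X]big1 ?addr0; last first.
  by move=> m /andP[m2 m1]; apply: F0.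
rewrite -[RHS]big_filter; apply: perm_big; apply: uniq_perm => //.
  exact: filter_uniq.
by move=> m; rewrite mem_filter; case E: (m \in s1) => //=; rewrite sub.
Qed.

Section Coefficients.
Variable R : comNzRingType.
Local Notation P := {mpoly R[4]}.

Definition coef (p : P) (q : quad) : R := p@_(mk q).

Lemma homog_eval (p : P) d x : uniq (exponents d) -> p \is d.-homog ->
  p.@[x] = \sum_(q <- exponents d) coef p q * mono q x.
Proof.
move=> uL hp; rewrite mevalE.
rewrite (eq_bigr (fun m => p@_m * mono (quad_of m) x)); last first.
  by move=> m _; rewrite /mono big_ord4.
have -> : \sum_(q <- exponents d) coef p q * mono q x =
           \sum_(m <- map mk (exponents d)) p@_m * mono (quad_of m) x.
  by rewrite big_map; apply: eq_bigr => q _; rewrite mkK.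
apply: big_uniq_superset.
- exact: msupp_uniq.
- by rewrite map_inj_uniq //; apply: can_inj mkK.
- move=> m mp; rewrite -[m]quad_ofK map_f //.
  by rewrite -(dhomogP _ _ _ hp m mp); apply: quad_of_exponents.
- by move=> m _ /memN_msupp_eq0 ->; rewrite mul0r.
Qed.

Lemma homog_eq (p p' : P) d : p \is d.-homog -> p' \is d.-homog ->
  (forall q, q \in exponents d -> coef p q = coef p' q) -> p = p'.
Proof.
move=> hp hp' E; apply/mpolyP => m.
have [Hm|Hm] := eqVneq (mdeg m) d; last by rewrite !(dhomog_nemf_coeff _ Hm).
by rewrite -[m]quad_ofK; apply: E; rewrite -Hm quad_of_exponents.
Qed.

End Coefficients.

Section FirstOrderExpansion.
Variable R : realFieldType.

Definition bounded_on_unit (r : R -> R) : Prop :=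
  exists K : R, forall t, `|t| <= 1 -> `|r t| <= K.

Definition expansion (phi : R -> R) (a0 a1 : R) : Prop :=
  exists r, bounded_on_unit r /\ forall t, phi t = a0 + t * a1 + t ^+ 2 * r t.

Lemma bounded_const c : bounded_on_unit (fun _ => c).
Proof. by exists `|c|. Qed.

Lemma bounded_add r s : bounded_on_unit r -> bounded_on_unit s ->
  bounded_on_unit (fun t => r t + s t).
Proof.
move=> [K HK] [L HL]; exists (K + L) => t Ht.
by apply: le_trans (ler_normD _ _) _; apply: lerD; [apply: HK | apply: HL].
Qed.

Lemma bounded_mul r s : bounded_on_unit r -> bounded_on_unit s ->
  bounded_on_unit (fun t => r t * s t).
Proof.
move=> [K HK] [L HL]; exists (K * L) => t Ht.
by rewrite normrM; apply: ler_pM => //; [apply: HK | apply: HL].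
Qed.

Lemma bounded_id : bounded_on_unit id.
Proof. by exists 1. Qed.

Lemma expansion_ext phi psi a0 a1 b0 b1 : phi =1 psi -> a0 = b0 -> a1 = b1 ->
  expansion phi a0 a1 -> expansion psi b0 b1.
Proof. by move=> E <- <- [r [Br Hr]]; exists r; split=> // t; rewrite -E. Qed.

Lemma expansion_affine u v : expansion (fun t => u + t * v) u v.
Proof. by exists (fun _ => 0); split=> [|t]; [apply: bounded_const | ring]. Qed.

Lemma expansion_add phi psi a0 a1 b0 b1 :
  expansion phi a0 a1 -> expansion psi b0 b1 ->
  expansion (fun t => phi t + psi t) (a0 + b0) (a1 + b1).
Proof.
move=> [r [Br Hr]] [s [Bs Hs]]; exists (fun t => r t + s t).
by split=> [|t]; [apply: bounded_add | rewrite Hr Hs; ring].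
Qed.

Lemma expansion_mul phi psi a0 a1 b0 b1 :
  expansion phi a0 a1 -> expansion psi b0 b1 ->
  expansion (fun t => phi t * psi t) (a0 * b0) (a0 * b1 + a1 * b0).
Proof.
move=> [r [Br Hr]] [s [Bs Hs]].
exists (fun t => a1 * b1 + a0 * s t + r t * b0
                 + t * (a1 * s t + r t * b1 + t * (r t * s t))).
split=> [|t]; last by rewrite Hr Hs; ring.
by repeat first [ apply: bounded_add | apply: bounded_mul | assumption
                | apply: bounded_const | apply: bounded_id ].
Qed.

Lemma expansion_scale c phi a0 a1 : expansion phi a0 a1 ->
  expansion (fun t => c * phi t) (c * a0) (c * a1).
Proof.
move=> H; apply: expansion_ext (expansion_mul (expansion_affine c 0) H) => [t||];
  ring.
Qed.

Lemma expansion_pow phi a0 a1 k : expansion phi a0 a1 ->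
  expansion (fun t => phi t ^+ k) (a0 ^+ k) (k%:R * a0 ^+ k.-1 * a1).
Proof.
move=> H; elim: k => [|k IH].
  by apply: expansion_ext (expansion_affine 1 0) => [t||];
    rewrite ?expr0 ?mulr0 ?mul0r ?addr0.
apply: expansion_ext (expansion_mul H IH) => [t|//|]; rewrite ?exprS //.
by case: k {IH} => [|k]; rewrite /= ?expr0 -?[k.+2%:R]natr1 ?exprS; ring.
Qed.

Lemma expansion_sum (I : Type) (s : seq I) (F : I -> R -> R) (A0 A1 : I -> R) :
  (forall i, expansion (F i) (A0 i) (A1 i)) ->
  expansion (fun t => \sum_(i <- s) F i t) (\sum_(i <- s) A0 i) (\sum_(i <- s) A1 i).
Proof.
move=> H; elim: s => [|i s IH].
  by apply: expansion_ext (expansion_affine 0 0) => [t|//|]; rewrite ?big_nil ?mulr0 ?addr0.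
by apply: expansion_ext (expansion_add (H i) IH) => [t|//|//]; rewrite big_cons.
Qed.

Lemma expansion_min phi a : expansion phi 0 a ->
  (forall t, `|t| <= 1 -> 0 <= phi t) -> a = 0.
Proof.
move=> [r [[K HK] Hr]] Hphi.
have K0 : 0 <= K by apply: le_trans (HK 0 _); rewrite ?normr0.
pose D := `|a| + K + 1.
have D0 : 0 < D by rewrite /D; apply: ltr_wpDl => //; apply: addr_ge0.
pose t := - a / D.
have aE : a = - (t * D) by rewrite /t divfK ?opprK // gt_eqF.
have Ht : `|t| <= 1.
  rewrite /t normrM normrN normfV (gtr0_norm D0) ler_pdivrMr // mul1r /D.
  by rewrite -addrA lerDl addr_ge0.
have rK : t ^+ 2 * r t <= t ^+ 2 * K.
  by apply: ler_wpM2l; [apply: sqr_ge0 | apply: le_trans (ler_norm _) (HK t Ht)].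
have DK : 0 < D - K by rewrite /D; have := normr_ge0 a; lra.
have t2_le0 : t ^+ 2 <= 0.
  rewrite -(pmulr_lle0 _ DK); have := Hphi t Ht; rewrite Hr add0r aE.
  have -> : t * - (t * D) = - (t ^+ 2 * D) by ring.
  by rewrite mulrBr; lra.
have t0 : t = 0 by apply/eqP; rewrite -sqrf_eq0 eq_le t2_le0 sqr_ge0.
by rewrite aE t0 mul0r oppr0.
Qed.

End FirstOrderExpansion.

Section SlopesOfNonnegativeForms.
Variable R : realFieldType.
Local Notation P := {mpoly R[4]}.

Definition shift (z : 'I_4 -> R) (i : 'I_4) (t : R) : 'I_4 -> R :=
  fun j => z j + t * (j == i)%:R.

Lemma expansion_mono q z i :
  expansion (fun t => mono q (shift z i t)) (mono q z) (dmono q z i).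
Proof.
have E j k := expansion_pow k (expansion_affine (z j) (j == i)%:R).
apply: expansion_ext
  (expansion_mul (expansion_mul (expansion_mul (E i0 _) (E i1 _)) (E i2 _)) (E i3 _))
  => //.
by rewrite /dmono /dpow; ring.
Qed.

Lemma slope_at_zero (p : P) d z i : uniq (exponents d) -> p \is d.-homog ->
  (forall t, `|t| <= 1 -> 0 <= p.@[shift z i t]) -> p.@[z] = 0 ->
  \sum_(q <- exponents d) coef p q * dmono q z i = 0.
Proof.
move=> uL hp Hpos Hz; apply: expansion_min Hpos.
rewrite (homog_eval z uL hp) in Hz.
have := expansion_sum (exponents d)
  (fun q => expansion_scale (coef p q) (expansion_mono q z i)).
by apply: expansion_ext => [t|//|//]; rewrite (homog_eval _ uL hp).
Qed.

End SlopesOfNonnegativeForms.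

(* Only the elementary operations matter for correctness: every output row
   is obtained from input rows by integer combinations and exact division. *)
Fixpoint lincomb (a b : Z) (r s : seq Z) : seq Z :=
  match r, s with
  | [::], _ => [seq b * y | y <- s]
  | _, [::] => [seq a * x | x <- r]
  | x :: r', y :: s' => (a * x + b * y) :: lincomb a b r' s'
  end.

Definition content (r : seq Z) : Z := foldr Z.gcd 0 r.

(* Divide a row by the gcd of its entries, keeping the numbers small. *)
Definition normalize (r : seq Z) : seq Z :=
  let g := content r in if g == 0 then r else [seq Z.div x g | x <- r].

Definition pivot_out (j : nat) (r s : seq Z) : seq Z :=
  normalize (lincomb (nth 0 r j) (- nth 0 s j) s r).

Definition nonzero (r : seq Z) : bool := has (fun x => x != 0) r.

(* Process the columns cols in turn; piv holds the pivot rows found so far,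
   rest the remaining nonzero rows. *)
Fixpoint gauss (cols : seq nat) (piv rest : seq (seq Z)) : seq (seq Z) :=
  if cols is j :: cols' then
    if [seq r <- rest | nth 0 r j != 0] is r :: _ then
      gauss cols' (r :: [seq pivot_out j r s | s <- piv])
                  [seq s <- [seq pivot_out j r s | s <- rest] | nonzero s]
    else gauss cols' piv rest
  else piv ++ rest.

Definition reduced (n : nat) (rows : seq (seq Z)) : seq (seq Z) :=
  gauss (iota 0 n) [::] rows.

Definition supported (n : nat) (r : seq Z) (S : seq nat) : bool :=
  all (fun j => (j \in S) || (nth 0 r j == 0)) (iota 0 n).

Definition isolates (n : nat) (r : seq Z) (k : nat) : bool :=
  [&& (k < n)%N, nth 0 r k != 0 & supported n r [:: k]].

Definition links (n : nat) (r : seq Z) (k k0 : nat) : bool :=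
  [&& k != k0, (k < n)%N, (k0 < n)%N, nth 0 r k != 0 & supported n r [:: k; k0]].

Definition determined (n k0 : nat) (rows : seq (seq Z)) : bool :=
  let E := reduced n rows in
  (k0 < n)%N && all (fun k => (k == k0) || has (fun r => links n r k k0) E) (iota 0 n).

Lemma nth_map0 (f : Z -> Z) (s : seq Z) j : f 0 = 0 ->
  nth 0 [seq f x | x <- s] j = f (nth 0 s j).
Proof.
move=> f0; have [lt_js|le_sj] := ltnP j (size s); first exact: nth_map.
by rewrite !nth_default ?size_map.
Qed.

Lemma nth_lincomb a b r s j :
  nth 0 (lincomb a b r s) j = a * nth 0 r j + b * nth 0 s j.
Proof.
by elim: r s j => [|x r IH] [|y s] [|j] //=; rewrite ?nth_map0 ?mulr0 ?add0r ?addr0.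
Qed.

Lemma content_dvd r j : Z.divide (content r) (nth 0 r j).
Proof.
elim: r j => [|x r IH] [|j] /=; try exact: Z.divide_0_r.
  exact: Z.gcd_divide_l.
exact: Z.divide_trans (Z.gcd_divide_r _ _) (IH j).
Qed.

Lemma normalizeK r j : content r != 0 ->
  nth 0 r j = content r * nth 0 (normalize r) j.
Proof.
move=> /eqP g0; rewrite /normalize (negbTE (introN eqP g0)) nth_map0 ?Zdiv_0_l //.
by apply/(Z.div_exact _ _ g0)/(Z.mod_divide _ _ g0); apply: content_dvd.
Qed.

Definition zR {R : nzRingType} : Z -> R := intr \o int_of_Z.
HB.instance Definition _ (R : nzRingType) := GRing.RMorphism.on (@zR R).

Lemma zR_eq0 (R : numDomainType) z : (zR z == 0 :> R) = (z == 0).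
Proof. by rewrite /zR /= intr_eq0 -(inj_eq (can_inj int_of_ZK)) rmorph0. Qed.

Section LinearRelations.
Variables (R : numFieldType) (n : nat).

Definition dot (c : nat -> R) (r : seq Z) : R := \sum_(k < n) c k * zR (nth 0 r k).

Definition annihilates (c : nat -> R) (rows : seq (seq Z)) : Prop :=
  forall r, r \in rows -> dot c r = 0.

Lemma dot_lincomb c a b r s :
  dot c (lincomb a b r s) = zR a * dot c r + zR b * dot c s.
Proof.
rewrite /dot !mulr_sumr -big_split; apply: eq_bigr => k _.
by rewrite nth_lincomb rmorphD !rmorphM /=; ring.
Qed.

Lemma dot_normalize c r : dot c r = 0 -> dot c (normalize r) = 0.
Proof.
have [g0|g0] := eqVneq (content r) 0; first by rewrite /normalize g0 eqxx.
have -> : dot c r = zR (content r) * dot c (normalize r).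
  rewrite /dot mulr_sumr; apply: eq_bigr => k _.
  by rewrite {1}(normalizeK _ g0) rmorphM; ring.
by move/eqP; rewrite mulf_eq0 zR_eq0 (negbTE g0) => /eqP.
Qed.

Lemma dot_pivot_out c j r s :
  dot c r = 0 -> dot c s = 0 -> dot c (pivot_out j r s) = 0.
Proof. by move=> r0 s0; apply: dot_normalize; rewrite dot_lincomb r0 s0 !mulr0 addr0. Qed.

Lemma annihilates_gauss c cols piv rest :
  annihilates c (piv ++ rest) -> annihilates c (gauss cols piv rest).
Proof.
elim: cols piv rest => [|j cols IH] piv rest /= H; first exact: H.
case E: [seq r <- rest | nth 0 r j != 0] => [|r0 others]; first exact: IH.
have r0_in : r0 \in rest by have := mem_head r0 others; rewrite -E mem_filter => /andP[].
have r00 : dot c r0 = 0 by apply: H; rewrite mem_cat r0_in orbT.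
apply: IH => s; rewrite mem_cat in_cons -orbA => /or3P[/eqP->//|/mapP[s' s'_in ->]|].
- by apply: dot_pivot_out => //; apply: H; rewrite mem_cat s'_in.
- rewrite mem_filter => /andP[_ /mapP[s' s'_in ->]].
  by apply: dot_pivot_out => //; apply: H; rewrite mem_cat s'_in orbT.
Qed.

Lemma annihilates_reduced c rows :
  annihilates c rows -> annihilates c (reduced n rows).
Proof. by move=> a; apply: annihilates_gauss; rewrite cat0s. Qed.

Lemma dot_supported c r S : supported n r S -> uniq S ->
  all (fun j => j < n)%N S -> dot c r = \sum_(j <- S) c j * zR (nth 0 r j).
Proof.
move=> /allP sup uS /allP Sn.
rewrite /dot -(big_mkord xpredT (fun k => c k * zR (nth 0 r k))) /index_iota subn0.
symmetry; apply: big_uniq_superset => [||j jS|j jn jS] //; first exact: iota_uniq.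
  by rewrite mem_iota add0n Sn.
by move: (sup j jn); rewrite (negbTE jS) => /eqP->; rewrite rmorph0 mulr0.
Qed.

Lemma dot_isolates c r k : isolates n r k -> dot c r = c k * zR (nth 0 r k).
Proof. by case/and3P=> kn _ sup; rewrite (dot_supported _ sup) /= ?kn // big_seq1. Qed.

Lemma dot_links c r k k0 : links n r k k0 ->
  dot c r = c k * zR (nth 0 r k) + c k0 * zR (nth 0 r k0).
Proof.
case/and5P=> kk0 kn k0n _ sup.
by rewrite (dot_supported _ sup) /= ?inE ?kk0 ?kn ?k0n // big_cons big_seq1.
Qed.

Lemma proportional_of_determined k0 rows (c1 c2 : nat -> R) :
  determined n k0 rows -> annihilates c1 rows -> annihilates c2 rows ->
  c2 k0 = 1 -> forall k, (k < n)%N -> c1 k = c1 k0 * c2 k.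
Proof.
move=> /andP[_ /allP det] a1 a2 c21 k kn.
have [->|kk0] := eqVneq k k0; first by rewrite c21 mulr1.
have : k \in iota 0 n by rewrite mem_iota.
move/det; rewrite (negbTE kk0) => /hasP[r r_in lr].
have := annihilates_reduced a1 r_in; have := annihilates_reduced a2 r_in.
rewrite !(dot_links _ lr) c21 mul1r => /eqP e2 /eqP e1.
have rk : zR (nth 0 r k) != 0 :> R by rewrite zR_eq0; case/and5P: lr.
apply: (mulIf rk); move: e2 e1; rewrite addrC addr_eq0 => /eqP->.
by rewrite mulrN subr_eq0 mulrA => /eqP.
Qed.

Lemma isolated_zero k rows c : has (fun r => isolates n r k) (reduced n rows) ->
  annihilates c rows -> c k = 0.
Proof.
move=> /hasP[r r_in ir] a; have := annihilates_reduced a r_in.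
rewrite (dot_isolates _ ir) => /eqP; rewrite mulf_eq0 zR_eq0.
by case/and3P: ir => _ /negbTE-> _; rewrite orbF => /eqP.
Qed.

End LinearRelations.

Definition g4fun (S : comNzRingType) (a b c d : S) : S :=
  a ^+ 3 + b ^+ 3 + c ^+ 3 + d ^+ 3 + 3%:R * (b * c * d + a * c * d + a * b * d + a * b * c)
  - (a ^+ 2 * (b + c + d) + b ^+ 2 * (a + c + d) + c ^+ 2 * (a + b + d) + d ^+ 2 * (a + b + c)).

Lemma g4fun_rmorph (S T : comNzRingType) (phi : {rmorphism S -> T}) a b c d :
  phi (g4fun a b c d) = g4fun (phi a) (phi b) (phi c) (phi d).
Proof. by rewrite /g4fun !(rmorphB, rmorphD, rmorphM, rmorphXn, rmorph_nat, rmorph1); ring. Qed.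

Section NonnegativeOnOrthant.
Variable R : realFieldType.

(* On a sorted point d <= c <= b <= a of the orthant, g4 is a polynomial
   with nonnegative coefficients in d and the gaps c - d, b - c, a - b. *)
Lemma g4fun_sorted (a b c d : R) : 0 <= d -> d <= c -> c <= b -> b <= a ->
  0 <= g4fun a b c d.
Proof.
move=> d0 dc cb ba.
have -> : g4fun a b c d =
  let u := c - d in let v := b - c in let w := a - b in
  w ^+ 3 + 2%:R * v * w ^+ 2 + u * w ^+ 2 + u * v * w + u * v ^+ 2 + 2%:R * d * v * w
  + 2%:R * d * v ^+ 2 + 4%:R * d * u * w + 8%:R * d * u * v + 6%:R * d * u ^+ 2
  + 3%:R * d ^+ 2 * w + 6%:R * d ^+ 2 * v + 9%:R * d ^+ 2 * u + 4%:R * d ^+ 3.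
  by rewrite /g4fun /=; ring.
rewrite -subr_ge0 in dc; rewrite -subr_ge0 in cb; rewrite -subr_ge0 in ba.
move: (c - d) (b - c) (a - b) dc cb ba => u v w u0 v0 w0 /=.
by repeat apply: addr_ge0; repeat apply: mulr_ge0 => //; rewrite ?exprn_ge0.
Qed.

(* g4 is symmetric, so the sorted case suffices; we sort step by step. *)
Lemma g4fun_max_first3 (a b c d : R) : 0 <= c -> 0 <= d -> c <= b -> d <= b -> b <= a ->
  0 <= g4fun a b c d.
Proof.
move=> *; have [dc|cd] := lerP d c; first exact: g4fun_sorted.
have -> : g4fun a b c d = g4fun a b d c by rewrite /g4fun; ring.
by apply: g4fun_sorted => //; apply: ltW.
Qed.

Lemma g4fun_max_first (a b c d : R) : 0 <= b -> 0 <= c -> 0 <= d ->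
  b <= a -> c <= a -> d <= a -> 0 <= g4fun a b c d.
Proof.
move=> *.
have Mc : b <= c -> d <= c -> 0 <= g4fun a b c d.
  move=> *; rewrite (_ : g4fun _ _ _ _ = g4fun a c b d); last by rewrite /g4fun; ring.
  exact: g4fun_max_first3.
have Md : b <= d -> c <= d -> 0 <= g4fun a b c d.
  move=> *; rewrite (_ : g4fun _ _ _ _ = g4fun a d b c); last by rewrite /g4fun; ring.
  exact: g4fun_max_first3.
have [cb|bc] := lerP c b.
- by have [db|bd] := lerP d b; [apply: g4fun_max_first3 | apply: Md]; lra.
- by have [dc|cd] := lerP d c; [apply: Mc | apply: Md]; lra.
Qed.

Lemma g4fun_nonneg (a b c d : R) : 0 <= a -> 0 <= b -> 0 <= c -> 0 <= d ->
  0 <= g4fun a b c d.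
Proof.
move=> a0 b0 c0 d0.
have Ma : b <= a -> c <= a -> d <= a -> 0 <= g4fun a b c d.
  by move=> *; apply: g4fun_max_first.
have Mb : a <= b -> c <= b -> d <= b -> 0 <= g4fun a b c d.
  move=> *; rewrite (_ : g4fun _ _ _ _ = g4fun b a c d); last by rewrite /g4fun; ring.
  exact: g4fun_max_first.
have Mc : a <= c -> b <= c -> d <= c -> 0 <= g4fun a b c d.
  move=> *; rewrite (_ : g4fun _ _ _ _ = g4fun c a b d); last by rewrite /g4fun; ring.
  exact: g4fun_max_first.
have Md : a <= d -> b <= d -> c <= d -> 0 <= g4fun a b c d.
  move=> *; rewrite (_ : g4fun _ _ _ _ = g4fun d a b c); last by rewrite /g4fun; ring.
  exact: g4fun_max_first.
have [ba|ab] := lerP b a; [have [ca|ac] := lerP c a | have [cb|bc] := lerP c b].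
- by have [da|ad] := lerP d a; [apply: Ma | apply: Md]; lra.
- by have [dc|cd] := lerP d c; [apply: Mc | apply: Md]; lra.
- by have [db|bd] := lerP d b; [apply: Mb | apply: Md]; lra.
- by have [dc|cd] := lerP d c; [apply: Mc | apply: Md]; lra.
Qed.

End NonnegativeOnOrthant.

Section TheForms.
Variable R : realType.
Local Notation P := {mpoly R[4]}.

Lemma g4_eval x : (g4 R).@[x] = g4fun (x i0) (x i1) (x i2) (x i3).
Proof.
rewrite /g4 /S3 /S111 /T21 !big_ord4 !(big_mkcond (fun j : 'I_4 => j != _)) !big_ord4 /=.
rewrite !exprS !expr0.
by rewrite !(mevalD, mevalB, mevalN, mevalM, mevalZ, mevalXU, meval1, meval0) /g4fun; ring.
Qed.

Lemma g4sq_eval x :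
  (g4sq R).@[x] = g4fun (x i0 ^+ 2) (x i1 ^+ 2) (x i2 ^+ 2) (x i3 ^+ 2).
Proof.
by rewrite /g4sq comp_mpoly_meval g4_eval !tnth_mktuple !expr2 !mevalM !mevalXU.
Qed.

Lemma dhomogXU (i : 'I_4) k : ('X_i : P) ^+ k \is k.-homog.
Proof.
have X1 : ('X_i : P) \is 1.-homog by rewrite dhomogX; apply/eqP; apply: mdeg1.
by have := dhomogMn k X1; rewrite mul1n.
Qed.

Lemma dhomogM_eq (p q : P) d e f :
  p \is d.-homog -> q \is e.-homog -> (d + e)%N = f -> p * q \is f.-homog.
Proof. by move=> hp hq <-; apply: dhomogM. Qed.

Lemma g4_homog : g4 R \is 3.-homog.
Proof.
have X1 (i : 'I_4) : ('X_i : P) \is 1.-homog by rewrite -[X in X \is _]expr1 dhomogXU.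
have X3 (i j k : 'I_4) : ('X_i * 'X_j * 'X_k : P) \is 3.-homog.
  by apply: (dhomogM_eq (dhomogM_eq (X1 i) (X1 j) _) (X1 k)).
rewrite /g4 /S3 /S111 /T21 !big_ord4 !(big_mkcond (fun j : 'I_4 => j != _)) !big_ord4 /=.
rewrite ?mul1r ?mulr1 ?add0r ?addr0.
apply: rpredB; first apply: rpredD.
- by repeat apply: rpredD; apply: dhomogXU.
- by apply: rpredZ; repeat apply: rpredD; apply: X3.
- repeat apply: rpredD; apply: (dhomogM_eq (e := 1) (dhomogXU _ 2)) => //;
    by repeat apply: rpredD; apply: X1.
Qed.

Lemma comp_sq_homog (p : P) d :
  p \is d.-homog -> comp_mpoly [tuple 'X_i ^+ 2 | i < 4] p \is (2 * d)%N.-homog.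
Proof.
move=> hp; rewrite comp_mpolyEX big_seq; apply: rpred_sum => m mp; apply: rpredZ.
rewrite comp_mpolyX big_ord4 /= !tnth_mktuple -!exprM.
have md : mdeg m = d by apply: (dhomogP _ _ _ hp).
have <- : (2 * m i0 + 2 * m i1 + 2 * m i2 + 2 * m i3)%N = (2 * d)%N.
  by rewrite -md mdegE big_ord4 /= !mulnDr.
by apply: dhomogM; [apply: dhomogM; [apply: dhomogM|]|]; apply: dhomogXU.
Qed.

Lemma g4sq_homog : g4sq R \is 6.-homog.
Proof. exact: (comp_sq_homog g4_homog). Qed.

End TheForms.

(* Integer points of R^4 and the rows of linear conditions they impose on
   the coefficient vector (in the order of exponents d) of a form of
   degree d: vanishing of the value, or of the slope in direction i. *)
Definition zpoint := (Z * Z * Z * Z)%type.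

Definition zcoord (w : zpoint) : 'I_4 -> Z :=
  fun j => nth 0 [:: w.1.1.1; w.1.1.2; w.1.2; w.2] j.

Definition value_row (d : nat) (w : zpoint) : seq Z :=
  [seq mono q (zcoord w) | q <- exponents d].

Definition slope_row (d : nat) (w : zpoint) (i : 'I_4) : seq Z :=
  [seq dmono q (zcoord w) i | q <- exponents d].

Definition grid (s : seq Z) : seq zpoint :=
  flatten [seq flatten [seq [seq (a, b, c, e) | c <- s, e <- s] | b <- s] | a <- s].

Lemma zcoord_grid s w j : w \in grid s -> zcoord w j \in s.
Proof.
move=> /flatten_mapP[a a_s /flatten_mapP[b b_s /allpairsP[[c e] [/= c_s e_s ->]]]].
by case: (ord4P j) => ->.
Qed.

Definition directions : seq 'I_4 := [:: i0; i1; i2; i3].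

(* The zeros of g4(a^2, b^2, c^2, d^2) with coordinates in {-1, 0, 1}
   (besides the origin: the 56 points with two or three coordinates +-1),
   and the zeros of g4 in {0, 1}^4. *)
Definition zeros6 : seq zpoint :=
  [seq w <- grid [:: - 1; 0; 1] |
    g4fun (zcoord w i0 ^+ 2) (zcoord w i1 ^+ 2) (zcoord w i2 ^+ 2) (zcoord w i3 ^+ 2) == 0].

Definition zeros3 : seq zpoint :=
  [seq w <- grid [:: 0; 1] | g4fun (zcoord w i0) (zcoord w i1) (zcoord w i2) (zcoord w i3) == 0].

(* A sextic in the face of g4sq has a critical zero at each point of zeros6. *)
Definition rows6 : seq (seq Z) :=
  [seq slope_row 6 w i | w <- zeros6, i <- directions].

(* A cubic in the face of g4 vanishes on zeros3, with vanishing slopes along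
   the directions that stay in the orthant. *)
Definition rows3 : seq (seq Z) :=
  [seq value_row 3 w | w <- zeros3] ++
  [seq slope_row 3 w i | w <- zeros3, i <- [seq i <- directions | zcoord w i == 1]].

(* A cubic whose square is a summand of g4sq vanishes on zeros6. *)
Definition cubic_rows : seq (seq Z) := [seq value_row 3 w | w <- zeros6].

Definition e1 : zpoint := (1, 0, 0, 0).

(* The index of the exponent of a^d among the exponents of degree d. *)
Definition top (d : nat) : nat := (size (exponents d)).-1.

Lemma exponents_uniq6 : uniq (exponents 6). Proof. by vm_compute. Qed.
Lemma exponents_uniq3 : uniq (exponents 3). Proof. by vm_compute. Qed.

Definition unit_at_e1 (d : nat) : bool :=
  isolates (size (exponents d)) (value_row d e1) (top d) &&
  (nth 0 (value_row d e1) (top d) == 1).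

Lemma unit_at_e1_6 : unit_at_e1 6. Proof. by vm_compute. Qed.
Lemma unit_at_e1_3 : unit_at_e1 3. Proof. by vm_compute. Qed.

Lemma rows6_determined : determined (size (exponents 6)) (top 6) rows6.
Proof. by vm_compute. Qed.

Lemma rows3_determined : determined (size (exponents 3)) (top 3) rows3.
Proof. by vm_compute. Qed.

Lemma cubic_rows_isolate :
  has (fun r => isolates (size (exponents 3)) r (top 3)) (reduced (size (exponents 3)) cubic_rows).
Proof. by vm_compute. Qed.

Section RowsOfForms.
Variable R : realFieldType.
Local Notation P := {mpoly R[4]}.

Definition coefs (p : P) (d : nat) (k : nat) : R :=
  coef p (nth (0, 0, 0, 0)%N (exponents d) k).

Lemma sum_exponents_dot (p : P) d (f : quad -> Z) :
  \sum_(q <- exponents d) coef p q * zR (f q) =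
  dot (size (exponents d)) (coefs p d) [seq f q | q <- exponents d].
Proof.
rewrite /dot (big_nth (0, 0, 0, 0)%N) big_mkord; apply: eq_bigr => k _.
by rewrite (nth_map (0, 0, 0, 0)%N).
Qed.

Lemma dot_slope_row (p : P) d w i : dot (size (exponents d)) (coefs p d) (slope_row d w i) =
  \sum_(q <- exponents d) coef p q * dmono q (zR \o zcoord w) i.
Proof. by rewrite -sum_exponents_dot; apply: eq_bigr => q _; rewrite dmono_rmorph. Qed.

Section Homogeneous.
Variables (p : P) (d : nat).
Hypotheses (uniq_d : uniq (exponents d)) (hom_p : p \is d.-homog).

Lemma dot_value_row w : dot (size (exponents d)) (coefs p d) (value_row d w) = p.@[zR \o zcoord w].
Proof.
rewrite (homog_eval _ uniq_d hom_p) -sum_exponents_dot.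
by apply: eq_bigr => q _; rewrite mono_rmorph.
Qed.

Lemma coefs_top : unit_at_e1 d -> coefs p d (top d) = p.@[zR \o zcoord e1].
Proof.
case/andP=> iso /eqP one; rewrite -dot_value_row (dot_isolates _ iso) one.
by rewrite rmorph1 mulr1.
Qed.

End Homogeneous.

Lemma homog_scaled (f g : P) d a : f \is d.-homog -> g \is d.-homog ->
  (forall k, (k < size (exponents d))%N -> coefs g d k = a * coefs f d k) ->
  g = a *: f.
Proof.
move=> hf hg E; apply: (homog_eq hg (rpredZ a hf)) => q q_in.
rewrite /coef mcoeffZ -/(coef f q) -/(coef g q) -(nth_index (0, 0, 0, 0)%N q_in).
by apply: E; rewrite index_mem.
Qed.

Lemma proportional_form d rows (p g : P) :
  uniq (exponents d) -> unit_at_e1 d -> p \is d.-homog -> g \is d.-homog ->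
  determined (size (exponents d)) (top d) rows ->
  annihilates (size (exponents d)) (coefs p d) rows ->
  annihilates (size (exponents d)) (coefs g d) rows ->
  p.@[zR \o zcoord e1] = 1 -> g = g.@[zR \o zcoord e1] *: p.
Proof.
move=> uL e1d hp hg det ap ag p1; apply: (homog_scaled hp hg) => k kn.
rewrite -(coefs_top uL hg e1d); apply: (proportional_of_determined det ag ap) kn.
by rewrite (coefs_top uL hp e1d).
Qed.

End RowsOfForms.

Section ElementaryFacts.
Variable R : realFieldType.
Local Notation P := {mpoly R[4]}.

Lemma nonzero_of_eval (p : P) x : p.@[x] = 1 -> p != 0.
Proof. by apply: contra_eqN => /eqP->; rewrite meval0 eq_sym oner_eq0. Qed.

Lemma squeeze_zero (p g : P) x : 0 <= g.@[x] -> 0 <= (p - g).@[x] -> p.@[x] = 0 ->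
  g.@[x] = 0.
Proof. by rewrite mevalB => g0 + p0; rewrite p0 sub0r oppr_ge0 => gle; apply/le_anti/andP. Qed.

Lemma sum_sqr_eq0 (I : eqType) (s : seq I) (F : I -> R) :
  \sum_(i <- s) F i ^+ 2 = 0 -> forall i, i \in s -> F i = 0.
Proof.
move/eqP; rewrite psumr_eq0 => [/allP F0 i /F0 /=|i _]; last exact: sqr_ge0.
by rewrite sqrf_eq0 => /eqP.
Qed.

End ElementaryFacts.

Section Main.
Variable R : realType.
Local Notation P := {mpoly R[4]}.
Local Notation f := (g4sq R).
Local Notation n6 := (size (exponents 6)).
Local Notation n3 := (size (exponents 3)).

Lemma extremal_of_face (C : P -> Prop) (p : P) : C p -> p != 0 ->
  (forall g, C g -> C (p - g) -> exists c, 0 <= c /\ g = c *: p) -> extremal C p.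
Proof.
move=> Cp p0 face; split=> //; split=> // g h Cg Ch pE.
by split; apply: face => //; rewrite pE ?addrK // addrC addKr.
Qed.

Lemma f_zero w : w \in zeros6 -> f.@[zR \o zcoord w] = 0.
Proof.
rewrite mem_filter => /andP[/eqP z _].
by rewrite g4sq_eval /= -!rmorphXn -g4fun_rmorph z rmorph0.
Qed.

Lemma g4_zero w : w \in zeros3 -> (g4 R).@[zR \o zcoord w] = 0.
Proof. by rewrite mem_filter => /andP[/eqP z _]; rewrite g4_eval /= -g4fun_rmorph z rmorph0. Qed.

Lemma f_e1 : f.@[zR \o zcoord e1] = 1.
Proof. by rewrite g4sq_eval /= rmorph1 rmorph0 /g4fun; ring. Qed.

Lemma g4_e1 : (g4 R).@[zR \o zcoord e1] = 1.
Proof. by rewrite g4_eval /= rmorph1 rmorph0 /g4fun; ring. Qed.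

Lemma f_P46 : P46 f.
Proof.
split=> [|x]; first exact: g4sq_homog.
by rewrite g4sq_eval; apply: g4fun_nonneg; apply: sqr_ge0.
Qed.

Lemma g4_Pplus43 : Pplus43 (g4 R).
Proof.
split=> [|x x0]; first exact: g4_homog.
by rewrite g4_eval; apply: g4fun_nonneg.
Qed.

Lemma grid01_nonneg w j : w \in grid [:: 0; 1] -> 0 <= zR (zcoord w j) :> R.
Proof.
by move/(zcoord_grid j); rewrite !inE => /orP[] /eqP->; rewrite ?rmorph0 ?rmorph1 ?ler01.
Qed.

Lemma annihilates_rows6 (p : P) : P46 p ->
  (forall w, w \in zeros6 -> p.@[zR \o zcoord w] = 0) ->
  annihilates n6 (coefs p 6) rows6.
Proof.
case=> hp pos z r /allpairsP[[w i] [w_in _ ->]].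
rewrite -[X in dot _ _ X]/(slope_row 6 w i) dot_slope_row.
by apply: (slope_at_zero exponents_uniq6 hp) (z w w_in) => t _; apply: pos.
Qed.

Lemma annihilates_rows3 (p : P) : Pplus43 p ->
  (forall w, w \in zeros3 -> p.@[zR \o zcoord w] = 0) ->
  annihilates n3 (coefs p 3) rows3.
Proof.
case=> hp pos z r; rewrite mem_cat => /orP[/mapP[w w_in ->]|].
  by rewrite (dot_value_row exponents_uniq3 hp) z.
case/allpairsPdep=> w [i [w_in i_in ->]].
rewrite dot_slope_row.
apply: (slope_at_zero exponents_uniq3 hp) (z w w_in) => t t1; apply: pos => j.
rewrite /shift; have [->|ji] := eqVneq j i; rewrite ?eqxx ?(negbTE ji) /=.
  move: i_in; rewrite mem_filter => /andP[/eqP-> _]; rewrite rmorph1 mulr1.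
  by move: t1; rewrite ler_norml => /andP[]; lra.
rewrite mulr0 addr0; apply: grid01_nonneg.
by move: w_in; rewrite mem_filter => /andP[].
Qed.

Lemma face6 (g : P) : P46 g -> P46 (f - g) -> exists c, 0 <= c /\ g = c *: f.
Proof.
move=> [hg gpos] [_ fgpos].
have g_zero w : w \in zeros6 -> g.@[zR \o zcoord w] = 0.
  by move=> w_in; apply: squeeze_zero (gpos _) (fgpos _) (f_zero w_in).
exists g.@[zR \o zcoord e1]; split=> //.
apply: (proportional_form exponents_uniq6 unit_at_e1_6 (g4sq_homog R) hg rows6_determined)
  _ _ f_e1.
- exact: annihilates_rows6 f_P46 f_zero.
- exact: annihilates_rows6 (conj hg gpos) g_zero.
Qed.

Lemma face3 (g : P) : Pplus43 g -> Pplus43 (g4 R - g) ->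
  exists c, 0 <= c /\ g = c *: g4 R.
Proof.
move=> [hg gpos] [_ fgpos].
have g_zero w : w \in zeros3 -> g.@[zR \o zcoord w] = 0.
  move=> w_in; have w_nonneg j : 0 <= zR (zcoord w j) :> R.
    by apply: grid01_nonneg; move: w_in; rewrite mem_filter => /andP[].
  by apply: squeeze_zero (gpos _ w_nonneg) (fgpos _ w_nonneg) (g4_zero w_in).
exists g.@[zR \o zcoord e1]; split.
  by apply: gpos => j; apply: grid01_nonneg.
apply: (proportional_form exponents_uniq3 unit_at_e1_3 (g4_homog R) hg rows3_determined)
  _ _ g4_e1.
- exact: annihilates_rows3 g4_Pplus43 g4_zero.
- exact: annihilates_rows3 (conj hg gpos) g_zero.
Qed.

(* In a sum of squares of cubics equal to g4sq, every cubic vanishes on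
   zeros6, hence at e1; but g4sq(e1) = 1. *)
Lemma f_not_sos : ~ Sigma46 f.
Proof.
move=> [s [hs fE]].
have evalE x : f.@[x] = \sum_(q <- s) q.@[x] ^+ 2.
  by rewrite fE raddf_sum; apply: eq_bigr => q _; exact: rmorphXn.
have q_e1 q : q \in s -> q.@[zR \o zcoord e1] = 0.
  move=> q_in; have hq : q \is 3.-homog by move/allP: hs => /(_ q q_in).
  rewrite -(coefs_top exponents_uniq3 hq unit_at_e1_3).
  apply: (isolated_zero cubic_rows_isolate) => r /mapP[w w_in ->].
  rewrite (dot_value_row exponents_uniq3 hq).
  by apply: sum_sqr_eq0 q_in; rewrite -evalE f_zero.
have := f_e1; rewrite evalE big_seq big1 => [/eqP|q q_in]; last by rewrite q_e1 // expr0n.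
by rewrite eq_sym oner_eq0.
Qed.

End Main.

Theorem theorem2p10 (R : realType) :
  (extremal (@P46 R) (g4sq R) /\ ~ Sigma46 (g4sq R)) /\
  extremal (@Pplus43 R) (g4 R).
Proof.
split; first split.
- exact: extremal_of_face (f_P46 R) (nonzero_of_eval (f_e1 R)) (@face6 R).
- exact: f_not_sos.
- exact: extremal_of_face (g4_Pplus43 R) (nonzero_of_eval (g4_e1 R)) (@face3 R).
Qed.
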